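(* The $k$-linear category $k[\Delta_{a,\mathrm{inj}}]$ is free as a left and as a right $u_a(\Omega_a)$-module, where $u_a(\Omega_a)$ denotes the image of the $k$-linear functor $u_a\colon\Omega_a\to k[\Delta_{a,\mathrm{inj}}]$.
   Context: Let $k$ be a field. For a small category $\mathcal C$, $k[\mathcal C]$ is its $k$-linearization: same objects, $k[\mathcal C](x,y)$ the $k$-vector space with basis $\mathrm{Hom}_{\mathcal C}(x,y)$, composition extended bilinearly. $\Delta_{a,\mathrm{inj}}$ is the category with objects $[n]=\{0<1<\dots<n\}$ for $n\ge0$ and $[-1]=\varnothing$, and injective order-preserving maps as morphisms; for $0\le i\le n$ (and $n\ge 0$), $\delta^i\colon[n-1]\to[n]$ is the injective order-preserving map omitting $i$ (so $\delta^0\colon[-1]\to[0]$ is the empty map). $\Omega_a$ is the $k$-linear category with objects $[n]$, $n\ge -1$, generated by arrows $d_n\colon[n-1]\to[n]$ for $n\ge 0$ subject only to the relations $d_{n+1}d_n=0$ for $n\ge0$. The $k$-linear functor $u_a\colon\Omega_a\to k[\Delta_{a,\mathrm{inj}}]$ is the identity on objects and sends $d_n\mapsto\sum_{i=0}^n(-1)^i\delta^i$. *)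

From HB Require Import structures.
From mathcomp Require Import all_boot all_order all_algebra zify.
Set Implicit Arguments. Unset Strict Implicit. Unset Printing Implicit Defensive.
Import GRing.Theory.
Local Open Scope ring_scope.

(* Object [n] of Delta_{a,inj} (n >= -1) is encoded by its cardinality N = n+1 : nat,
   i.e. by the finite ordinal 'I_N = {0 < ... < N-1}.  [-1] = empty set <-> 0. *)

Definition incrb p q (f : {ffun 'I_p -> 'I_q}) : bool :=
  [forall i : 'I_p, forall j : 'I_p, (i < j)%N ==> (f i < f j)%N].

Record dhom (p q : nat) := DHom { dfun :> {ffun 'I_p -> 'I_q}; dfunP : incrb dfun }.
HB.instance Definition _ p q := [isSub for @dfun p q].
HB.instance Definition _ p q := [Finite of dhom p q by <:].

Lemma dcomp_incr p q r (g : dhom q r) (f : dhom p q) :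
  incrb [ffun i => g (f i)].
Proof.
apply/forallP => i; apply/forallP => j; apply/implyP => lij.
rewrite !ffunE.
have /forallP/(_ i)/forallP/(_ j)/implyP Hf := dfunP f.
have /forallP/(_ (f i))/forallP/(_ (f j))/implyP Hg := dfunP g.
exact: Hg (Hf lij).
Qed.

Definition dcomp p q r (g : dhom q r) (f : dhom p q) : dhom p r :=
  DHom (dcomp_incr g f).

Lemma lift_incr N (i : 'I_N.+1) : incrb [ffun j : 'I_N => lift i j].
Proof.
apply/forallP => a; apply/forallP => b; apply/implyP => lab.
rewrite !ffunE /= /bump.
case: (leqP i a) => ha; case: (leqP i b) => hb /=; lia.
Qed.

Definition delta N (i : 'I_N.+1) : dhom N N.+1 := DHom (lift_incr i).

(* The k-linearization k[Delta_{a,inj}]: hom space = k-vector space with basis dhom p q. *)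
Notation kD k p q := {ffun dhom p q -> (k : fieldType)^o} (only parsing).

Section Lin.
Variable k : fieldType.

Definition bvec p q (f : dhom p q) : kD k p q := [ffun g => (g == f)%:R].

Definition kcomp p q r (b : kD k q r) (a : kD k p q) : kD k p r :=
  [ffun h => \sum_(g : dhom q r) \sum_(f : dhom p q)
              (dcomp g f == h)%:R * (b g * a f)].

(* identity of object m (and 0 when m <> n) *)
Definition kid m n : kD k m n :=
  [ffun f : dhom m n => ((m == n) && [forall i : 'I_m, val (f i) == val i])%:R].

Definition ua_d N : kD k N N.+1 :=
  \sum_(i : 'I_N.+1) ((-1) ^+ i) *: bvec (delta i).

(* image under u_a of the unique composable path of generators d from m to n
   (the identity if m = n, d_n ... d_{m+1} if m < n; 0 if m > n, where the
   hom space is zero anyway).  Omega_a(m,n) is spanned by this path. *)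
Fixpoint ua_path m n : kD k m n :=
  match n with
  | 0 => kid m 0
  | n'.+1 => if m == n'.+1 then kid m n'.+1 else kcomp (ua_d n') (ua_path m n')
  end.

Definition inImg m n (x : kD k m n) : Prop := exists c : k, x = c *: ua_path m n.

(* k[Delta](p,-) is a free left u_a(Omega_a)-module (action by postcomposition):
   there are elements E z (for each object z, a list of elements of k[Delta](p,z))
   such that for every object q the map
     (beta_{z,j} in u_a(Omega_a)(z,q))  |->  sum_{z,j} beta_{z,j} o E z j
   is bijective.  (Objects z > q contribute nothing: k[Delta](z,q) = 0.) *)
Definition left_free_at (p : nat) : Prop :=
  exists E : forall z : nat, seq (kD k p z),
  forall q : nat,
    (forall x : kD k p q,
       exists beta : forall (z : 'I_q.+1) (j : 'I_(size (E z))), kD k z q,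
         (forall z j, inImg (beta z j)) /\
         x = \sum_(z : 'I_q.+1) \sum_(j : 'I_(size (E z)))
               kcomp (beta z j) (nth 0 (E z) j)) /\
    (forall beta : forall (z : 'I_q.+1) (j : 'I_(size (E z))), kD k z q,
       (forall z j, inImg (beta z j)) ->
       \sum_(z : 'I_q.+1) \sum_(j : 'I_(size (E z)))
            kcomp (beta z j) (nth 0 (E z) j) = 0 ->
       forall z j, beta z j = 0).

(* k[Delta](-,q) is a free right u_a(Omega_a)-module (action by precomposition);
   generators live in k[Delta](z,q), hence z <= q. *)
Definition right_free_at (q : nat) : Prop :=
  exists E : forall z : 'I_q.+1, seq (kD k z q),
  forall p : nat,
    (forall x : kD k p q,
       exists beta : forall (z : 'I_q.+1) (j : 'I_(size (E z))), kD k p z,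
         (forall z j, inImg (beta z j)) /\
         x = \sum_(z : 'I_q.+1) \sum_(j : 'I_(size (E z)))
               kcomp (nth 0 (E z) j) (beta z j)) /\
    (forall beta : forall (z : 'I_q.+1) (j : 'I_(size (E z))), kD k p z,
       (forall z j, inImg (beta z j)) ->
       \sum_(z : 'I_q.+1) \sum_(j : 'I_(size (E z)))
            kcomp (nth 0 (E z) j) (beta z j) = 0 ->
       forall z j, beta z j = 0).

End Lin.

(* Because [d_(n+1) d_n = 0], the image of [u_a] from [z] to [q] is spanned by the
   identity when [z = q], by [u_a d_q] when [z = q - 1], and is zero otherwise.  Both
   freeness statements thus ask for a basis of k[Delta](p, q) made of two blocks, and
   both bases are unitriangular with respect to suitable pivots.  Write [dmin f] for
   the least value of [f]; then [delta^i f = delta^0 f] exactly when [i <= dmin f].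
   Left: the generators are the [f] with [dmin f] even.  The maps with [dmin f] odd are
   exactly the [delta^0 g] with [dmin g] even, and [d g = sum_i (-1)^i delta^i g] has
   coefficient [sum_(i <= dmin g) (-1)^i = 1] at [delta^0 g] and vanishes at every
   other [delta^0 g'], whose least value has the wrong parity.
   Right: the generators are the [e] with [dmin e = 0].  The maps missing [0] are
   exactly the [e delta^0] with [e 0 = 0], and [e d] has coefficient 1 at
   [e delta^0] and vanishes at every other [e' delta^0]. *)

From mathcomp Require Import all_boot all_order all_algebra zify.
Set Implicit Arguments. Unset Strict Implicit. Unset Printing Implicit Defensive.
Import Order.TTheory GRing.Theory.
Local Open Scope ring_scope.

Lemma dhom_ext a b (f g : dhom a b) : (forall i, val (f i) = val (g i)) -> f = g.
Proof. by move=> eq_fg; apply/val_inj/ffunP => i; apply/val_inj/eq_fg. Qed.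

Lemma dhom_lt a b (f : dhom a b) (i j : 'I_a) : (i < j)%N -> (f i < f j)%N.
Proof. by have /forallP/(_ i)/forallP/(_ j)/implyP := dfunP f. Qed.

Lemma dhom_le a b (f : dhom a b) (i j : 'I_a) : (i <= j)%N -> (f i <= f j)%N.
Proof. by rewrite leq_eqVlt => /predU1P[/val_inj -> // | /(dhom_lt f)/ltnW]. Qed.

Lemma dhom_inj a b (f : dhom a b) : injective f.
Proof.
move=> i j eq_f; case: (ltngtP i j) => [lt_ij|lt_ji|/val_inj //].
- by have := dhom_lt f lt_ij; rewrite eq_f ltnn.
- by have := dhom_lt f lt_ji; rewrite eq_f ltnn.
Qed.

Lemma dhom_leq a b (f : dhom a b) : (a <= b)%N.
Proof. by rewrite -[a]card_ord -[b]card_ord; apply: leq_card (@dhom_inj _ _ f). Qed.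

Lemma dhom_of_incr a b (g : 'I_a -> 'I_b) :
  {homo g : i j / (i < j)%N} -> exists f : dhom a b, forall i, f i = g i.
Proof.
move=> g_incr; have incr_g : incrb [ffun i => g i].
  by apply/forallP => i; apply/forallP => j; apply/implyP; rewrite !ffunE; apply: g_incr.
by exists (DHom incr_g) => i; rewrite ffunE.
Qed.

Lemma dcompE p q r (g : dhom q r) (f : dhom p q) i : dcomp g f i = g (f i).
Proof. by rewrite ffunE. Qed.

Lemma deltaE n (i : 'I_n.+1) j : delta i j = lift i j.
Proof. by rewrite ffunE. Qed.

Lemma did_incr n : incrb [ffun i : 'I_n => i].
Proof. by apply/forallP => i; apply/forallP => j; apply/implyP; rewrite !ffunE. Qed.

Definition did n : dhom n n := DHom (did_incr n).

Lemma dcomp_id p q (f : dhom p q) : dcomp (did q) f = f.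
Proof. by apply: dhom_ext => i; rewrite !ffunE. Qed.

Lemma dcomp_idr p q (f : dhom p q) : dcomp f (did p) = f.
Proof. by apply: dhom_ext => i; rewrite !ffunE. Qed.

(* [b] for the empty source: the identity of the empty object is then a generator on
   both sides. *)
Definition dmin a b (f : dhom a b) : nat := \big[minn/b]_(i : 'I_a) val (f i).

Lemma dminP a b (f : dhom a b) m :
  reflect ((m <= b)%N /\ forall i, (m <= f i)%N) (m <= dmin f)%N.
Proof.
have := @bigmin_geP _ nat _ b m xpredT (fun i => val (f i)).
rewrite /dmin -minEnat => minP.
by apply: (iffP minP) => -[le_m le_mf]; split=> // i; [apply: le_mf | move=> _; apply: le_mf].
Qed.

Lemma dmin_le_id a b (f : dhom a b) : (dmin f <= b)%N.
Proof. by have /dminP[] := leqnn (dmin f). Qed.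

Lemma dmin_le a b (f : dhom a b) i : (dmin f <= f i)%N.
Proof. by have /dminP[_] := leqnn (dmin f). Qed.

Lemma dmin0 b (f : dhom 0 b) : dmin f = b.
Proof. by rewrite /dmin big_ord0. Qed.

Lemma dminS a b (f : dhom a.+1 b) : dmin f = f ord0.
Proof.
apply/eqP; rewrite eqn_leq dmin_le; apply/dminP; split; first exact: ltnW.
by move=> i; apply: dhom_le.
Qed.

Lemma dmin_id n (f : dhom n n) : dmin f = 0%N.
Proof.
case: n f => [|n] f; first by rewrite dmin0.
have [g _ fK] := injF_bij (@dhom_inj _ _ f).
by apply/eqP; rewrite -leqn0; have := dmin_le f (g ord0); rewrite fK.
Qed.

Lemma eq_delta_dcomp0 p n (f : dhom p n) (i : 'I_n.+1) :
  (dcomp (delta i) f == dcomp (delta ord0) f) = (i <= dmin f)%N.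
Proof.
apply/eqP/dminP => [eq_f | [_ le_if]].
  split=> [|x]; first by rewrite -ltnS.
  have := congr1 (fun h : dhom p n.+1 => val (h x)) eq_f.
  by rewrite !dcompE !deltaE /= /bump leq0n; case: (i <= f x)%N => // /addIn.
by apply: dhom_ext => x; rewrite !dcompE !deltaE /= /bump leq0n le_if.
Qed.

Lemma dmin_delta0 p n (f : dhom p n) : dmin (dcomp (delta ord0) f) = (dmin f).+1.
Proof.
case: p f => [|p] f; first by rewrite !dmin0.
by rewrite !dminS dcompE deltaE lift0.
Qed.

Lemma dmin_dcomp_delta p n (f : dhom p n) (i : 'I_n.+1) :
  (dmin f < i)%N -> dmin (dcomp (delta i) f) = dmin f.
Proof.
case: p f => [|p] f; first by rewrite dmin0 ltnNge -ltnS ltn_ord.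
by rewrite !dminS dcompE deltaE /= /bump => lt_fi; rewrite leqNgt lt_fi.
Qed.

Lemma dcomp_delta_inj p n (i : 'I_n.+1) : injective (@dcomp p n n.+1 (delta i)).
Proof.
move=> f g eq_fg; apply: dhom_ext => x.
by have := congr1 (fun h : dhom p n.+1 => h x) eq_fg; rewrite !dcompE !deltaE => /lift_inj ->.
Qed.

Lemma dmin_gt0_factor p n (x : dhom p n.+1) :
  (0 < dmin x)%N -> exists f : dhom p n, dcomp (delta ord0) f = x.
Proof.
move=> dmin_gt0; have x_gt0 i : (0 < x i)%N := leq_trans dmin_gt0 (dmin_le x i).
have lt_xn i : ((x i).-1 < n)%N by rewrite -ltnS prednK.
have [f fE] : exists f : dhom p n, forall i, f i = Ordinal (lt_xn i).
  apply: dhom_of_incr => i j /(dhom_lt x) /=.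
  by have := x_gt0 i; rewrite -!subn1; lia.
by exists f; apply: dhom_ext => i; rewrite dcompE deltaE /= fE /bump add1n prednK.
Qed.

Lemma dmin_dcomp_delta0 p q (e : dhom p.+1 q) : (e ord0 < dmin (dcomp e (delta ord0)))%N.
Proof.
apply/dminP; split=> [|x]; first exact: ltn_ord.
by rewrite dcompE deltaE; apply: dhom_lt; rewrite lift0.
Qed.

Lemma eq_dcomp_delta0 p q (e e' : dhom p.+1 q) (i : 'I_p.+1) :
  val (e ord0) = val (e' ord0) -> dcomp e (delta i) = dcomp e' (delta ord0) ->
  i = ord0 /\ e = e'.
Proof.
move=> eq_e0 eq_e.
have eq_lift y : val (e (lift i y)) = val (e' (lift ord0 y)).
  by have := congr1 (fun h : dhom p q => val (h y)) eq_e; rewrite !dcompE !deltaE.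
have i0 : i = ord0.
  case: p e e' i eq_e0 eq_e eq_lift => [|p] e e' i eq_e0 _ eq_lift; first exact: ord1.
  case: (unliftP ord0 i) => [j def_i|//]; have := eq_lift ord0.
  have -> : lift i ord0 = ord0 by apply: val_inj; rewrite def_i.
  by rewrite eq_e0 => eq_e'; have := @dhom_lt _ _ e' ord0 (lift ord0 ord0) isT; rewrite -eq_e' ltnn.
split=> //; subst i; apply: dhom_ext => t.
by case: (unliftP ord0 t) => [y ->|->].
Qed.

Lemma dmin_gt0_extend p q (x : dhom p q) : (0 < dmin x)%N ->
  exists e : dhom p.+1 q, val (e ord0) = 0%N /\ dcomp e (delta ord0) = x.
Proof.
move=> /dminP[q_gt0 x_gt0].
pose g t := if unlift ord0 t is Some y then x y else Ordinal q_gt0.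
have [e eE] : exists e : dhom p.+1 q, forall t, e t = g t.
  apply: dhom_of_incr => t t'; rewrite /g.
  case: (unliftP ord0 t) => [y ->|->]; case: (unliftP ord0 t') => [y' ->|->] //=.
  by rewrite /bump !add1n ltnS => /(dhom_lt x).
exists e; split; first by rewrite eE /g unlift_none.
by apply: dhom_ext => y; rewrite dcompE deltaE eE /g liftK.
Qed.

Lemma kD_trivial (k : fieldType) a b (x y : kD k a b) : (b < a)%N -> x = y.
Proof. by move=> lt_ba; apply/ffunP => f; have := dhom_leq f; rewrite leqNgt lt_ba. Qed.

Lemma sum_eq_natr_mul (R : pzSemiRingType) (X : finType) (y : X) (F : X -> R) :
  \sum_x (x == y)%:R * F x = F y.
Proof. by rewrite (bigD1 y) //= eqxx mul1r big1 ?addr0 // => x /negbTE ->; rewrite mul0r. Qed.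

Section Linearization.
Variable k : fieldType.
Implicit Types p q r : nat.

Lemma scale_regE (c x : k) : c *: (x : k^o) = c * x.
Proof. by []. Qed.

Lemma kcompZl p q r c (b : kD k q r) (a : kD k p q) : kcomp (c *: b) a = c *: kcomp b a.
Proof.
apply/ffunP => h; rewrite !ffunE scaler_sumr; apply: eq_bigr => g _.
by rewrite scaler_sumr; apply: eq_bigr => f _; rewrite ffunE !scale_regE -mulrA mulrCA.
Qed.

Lemma kcompZr p q r c (b : kD k q r) (a : kD k p q) : kcomp b (c *: a) = c *: kcomp b a.
Proof.
apply/ffunP => h; rewrite !ffunE scaler_sumr; apply: eq_bigr => g _.
rewrite scaler_sumr; apply: eq_bigr => f _.
by rewrite ffunE !scale_regE [X in _ * X]mulrCA [RHS]mulrCA.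
Qed.

Lemma kcompDl p q r (b1 b2 : kD k q r) (a : kD k p q) :
  kcomp (b1 + b2) a = kcomp b1 a + kcomp b2 a.
Proof.
apply/ffunP => h; rewrite !ffunE -big_split; apply: eq_bigr => g _.
by rewrite -big_split; apply: eq_bigr => f _; rewrite ffunE mulrDl mulrDr.
Qed.

Lemma kcompDr p q r (b : kD k q r) (a1 a2 : kD k p q) :
  kcomp b (a1 + a2) = kcomp b a1 + kcomp b a2.
Proof.
apply/ffunP => h; rewrite !ffunE -big_split; apply: eq_bigr => g _.
by rewrite -big_split; apply: eq_bigr => f _; rewrite ffunE !mulrDr.
Qed.

Lemma kcomp_suml p q r I (s : seq I) (F : I -> kD k q r) (a : kD k p q) :
  kcomp (\sum_(i <- s) F i) a = \sum_(i <- s) kcomp (F i) a.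
Proof.
apply: (big_morph (fun b => kcomp b a)) => [b1 b2|]; first exact: kcompDl.
by rewrite -(scale0r 0) kcompZl scale0r.
Qed.

Lemma kcomp_sumr p q r I (s : seq I) (b : kD k q r) (F : I -> kD k p q) :
  kcomp b (\sum_(i <- s) F i) = \sum_(i <- s) kcomp b (F i).
Proof.
apply: (big_morph (fun a => kcomp b a)) => [a1 a2|]; first exact: kcompDr.
by rewrite -(scale0r 0) kcompZr scale0r.
Qed.

Lemma kD_sum_bvec p q (a : kD k p q) : a = \sum_f a f *: bvec k f.
Proof.
apply/ffunP => h; rewrite sum_ffunE -[LHS](sum_eq_natr_mul h a).
by apply: eq_bigr => f _; rewrite !ffunE mulrC eq_sym.
Qed.

Lemma kcomp_bvec p q r (g : dhom q r) (f : dhom p q) :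
  kcomp (bvec k g) (bvec k f) = bvec k (dcomp g f).
Proof.
apply/ffunP => h; rewrite !ffunE.
transitivity (\sum_g' (g' == g)%:R * \sum_f' (f' == f)%:R * (dcomp g' f' == h)%:R : k).
  apply: eq_bigr => g' _; rewrite mulr_sumr; apply: eq_bigr => f' _.
  by rewrite !ffunE mulrCA (mulrC (dcomp g' f' == h)%:R).
by rewrite sum_eq_natr_mul sum_eq_natr_mul eq_sym.
Qed.

Lemma kid_bvec n : kid k n n = bvec k (did n).
Proof.
apply/ffunP => g; rewrite !ffunE eqxx /=; congr (nat_of_bool _)%:R.
apply/forallP/eqP => [eq_g | -> i]; last by rewrite ffunE.
by apply: dhom_ext => i; rewrite ffunE; apply/eqP/eq_g.
Qed.

Lemma kcomp_idl p q (a : kD k p q) : kcomp (kid k q q) a = a.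
Proof.
rewrite [in RHS](kD_sum_bvec a) {1}(kD_sum_bvec a) kcomp_sumr; apply: eq_bigr => f _.
by rewrite kcompZr kid_bvec kcomp_bvec dcomp_id.
Qed.

Lemma kcomp_idr p q (b : kD k p q) : kcomp b (kid k p p) = b.
Proof.
rewrite [in RHS](kD_sum_bvec b) {1}(kD_sum_bvec b) kcomp_suml; apply: eq_bigr => f _.
by rewrite kcompZl kid_bvec kcomp_bvec dcomp_idr.
Qed.

Lemma kcomp_ua_d_bvec p n (f : dhom p n) :
  kcomp (ua_d k n) (bvec k f) = \sum_(i < n.+1) (-1) ^+ i *: bvec k (dcomp (delta i) f).
Proof. by rewrite kcomp_suml; apply: eq_bigr => i _; rewrite kcompZl kcomp_bvec. Qed.

Lemma kcomp_ua_d_bvecE p n (f : dhom p n) y :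
  kcomp (ua_d k n) (bvec k f) y = \sum_(i < n.+1) (-1) ^+ i * (y == dcomp (delta i) f)%:R.
Proof. by rewrite kcomp_ua_d_bvec sum_ffunE; apply: eq_bigr => i _; rewrite !ffunE. Qed.

Lemma kcomp_bvec_ua_dE p q (e : dhom p.+1 q) y :
  kcomp (bvec k e) (ua_d k p) y = \sum_(i < p.+1) (-1) ^+ i * (y == dcomp e (delta i))%:R.
Proof.
rewrite kcomp_sumr sum_ffunE; apply: eq_bigr => i _.
by rewrite kcompZr kcomp_bvec !ffunE.
Qed.

End Linearization.

Lemma sum_simplicial_eq0 (V : zmodType) n (T : nat -> nat -> V) :
  (forall a b, (a <= b)%N -> (b < n.+1)%N -> T b.+1 a = - T a b) ->
  \sum_(b < n.+2) \sum_(a < n.+1) T b a = 0.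
Proof.
move=> T_anti.
have splitT b : \sum_(a < n.+1) T b a =
    \sum_(a < n.+1) (if (a < b)%N then T b a else 0) +
    \sum_(a < n.+1) (if (a < b)%N then 0 else T b a).
  by rewrite -big_split; apply: eq_bigr => a _ /=; case: ifP; rewrite ?addr0 ?add0r.
rewrite (eq_bigr _ (fun (b : 'I_n.+2) _ => splitT b)) big_split /= big_ord_recl big1 ?add0r //.
rewrite [X in _ + X]big_ord_recr /= [X in _ + (_ + X)]big1 ?addr0 => [|a _]; last first.
  by rewrite ltn_ord.
rewrite [X in _ + X]exchange_big -big_split big1 // => b _.
rewrite -big_split big1 // => a _ /=.
rewrite /bump leq0n add1n ltnS; case: (leqP a b) => [le_ab|_]; last by rewrite addr0.
by rewrite T_anti ?ltn_ord // addNr.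
Qed.

Lemma delta_comp_comm p n (f : dhom p n) a b : (a <= b)%N -> (b < n.+1)%N ->
  dcomp (delta (inord b.+1 : 'I_n.+2)) (dcomp (delta (inord a)) f)
  = dcomp (delta (inord a : 'I_n.+2)) (dcomp (delta (inord b)) f).
Proof.
move=> le_ab lt_bn; apply: dhom_ext => x; rewrite !dcompE !deltaE /= !inordK; try lia.
by rewrite /bump; case: (leqP a (f x)); case: (leqP b (f x)) => /=; case: leqP; case: leqP; lia.
Qed.

Section Differential.
Variable k : fieldType.

Lemma ua_d_comp_ua_d p n (y : kD k p n) : kcomp (ua_d k n.+1) (kcomp (ua_d k n) y) = 0.
Proof.
rewrite (kD_sum_bvec y) !kcomp_sumr big1 // => f _.
rewrite !kcompZr kcomp_ua_d_bvec kcomp_sumr.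
under eq_bigr do rewrite kcompZr kcomp_ua_d_bvec scaler_sumr.
pose T b a := (-1) ^+ (b + a) *:
  bvec k (dcomp (delta (inord b : 'I_n.+2)) (dcomp (delta (inord a : 'I_n.+1)) f)).
rewrite exchange_big /= (eq_bigr (fun b : 'I_n.+2 => \sum_(a < n.+1) T b a)) => [|b _].
  rewrite sum_simplicial_eq0 ?scaler0 // => a b le_ab lt_bn.
  by rewrite /T delta_comp_comm // addSn exprS mulN1r scaleNr addnC.
by apply: eq_bigr => a _; rewrite /T !inord_val scalerA -exprD addnC.
Qed.

Lemma ua_path_id n : ua_path k n n = kid k n n.
Proof. by case: n => //= n; rewrite eqxx. Qed.

Lemma ua_path_d n : ua_path k n n.+1 = ua_d k n.
Proof. by rewrite /= ltn_eqF // ua_path_id kcomp_idr. Qed.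

Lemma ua_path_other m n : n != m -> n != m.+1 -> ua_path k m n = 0.
Proof.
move=> ne_m ne_Sm; case: (ltnP n m) => [lt_nm|le_mn]; first exact: kD_trivial.
case: n le_mn ne_m ne_Sm => [|[|n]] le_mn ne_m ne_Sm; try lia.
by rewrite /= !ltn_eqF ?ua_d_comp_ua_d //; lia.
Qed.

End Differential.

Lemma sum_sign (R : pzRingType) m : \sum_(i < m) (-1 : R) ^+ i = (odd m)%:R.
Proof.
elim: m => [|m IH]; first by rewrite big_ord0.
by rewrite big_ord_recr IH /= -signr_odd; case: (odd m); rewrite ?addrN ?add0r.
Qed.

Lemma sum_sign_leq (R : pzRingType) N m : (m < N)%N -> ~~ odd m ->
  \sum_(i < N) (-1 : R) ^+ i * (i <= m)%:R = 1.
Proof.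
move=> lt_mN even_m.
rewrite (eq_bigr (fun i : 'I_N => if (i < m.+1)%N then (-1 : R) ^+ i else 0)) => [|i _].
  by rewrite -big_mkcond -big_ord_widen // sum_sign /= even_m.
by rewrite ltnS; case: leqP; rewrite ?mulr1 ?mulr0.
Qed.

Section Pivots.
Variables (k : fieldType) (X : finType) (n : nat).
Variables (u : 'I_n -> {ffun X -> k^o}) (pu : 'I_n -> X).
Hypothesis u_ind : forall i, u i = [ffun x => (x == pu i)%:R].
Hypothesis pu_inj : injective pu.

Lemma sum_indicator_out (a : 'I_n -> k) x :
  (forall i, pu i != x) -> (\sum_i a i *: u i) x = 0.
Proof.
move=> ne_x; rewrite sum_ffunE big1 // => i _.
by rewrite u_ind !ffunE eq_sym (negbTE (ne_x i)) scale_regE mulr0.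
Qed.

Lemma sum_indicator_at (a : 'I_n -> k) i : (\sum_i' a i' *: u i') (pu i) = a i.
Proof.
rewrite sum_ffunE (bigD1 i) //= big1 => [|i' ne_i']; last first.
  by rewrite u_ind !ffunE (inj_eq pu_inj) eq_sym (negbTE ne_i') scale_regE mulr0.
by rewrite u_ind !ffunE eqxx scale_regE mulr1 addr0.
Qed.

Lemma indicator_indep (a : 'I_n -> k) : \sum_i a i *: u i = 0 -> forall i, a i = 0.
Proof. by move=> sum0 i; rewrite -(sum_indicator_at a) sum0 ffunE. Qed.

Lemma indicator_span : (forall x, exists i, pu i = x) ->
  forall x : {ffun X -> k^o}, exists a : nat -> k, x = \sum_(i < n) a i *: u i.
Proof.
move=> pu_onto x; exists (fun m => oapp (fun i => x (pu i)) 0 (insub m)).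
by apply/ffunP => y; have [i <-] := pu_onto y; rewrite sum_indicator_at /= valK.
Qed.

Variables (G : pred X) (m : nat) (w : 'I_m -> {ffun X -> k^o}) (pw : 'I_m -> X).
Hypothesis pu_in : forall i, G (pu i).
Hypothesis pw_notin : forall j, ~~ G (pw j).
Hypothesis w_pivot : forall j, w j (pw j) != 0.
Hypothesis w_off_pivot : forall j j', j != j' -> w j (pw j') = 0.

Lemma sum_pivot_at (b : 'I_m -> k) j : (\sum_j' b j' *: w j') (pw j) = b j * w j (pw j).
Proof.
rewrite sum_ffunE (bigD1 j) //= big1 => [|j' ne_j']; first by rewrite addr0 ffunE.
by rewrite ffunE w_off_pivot ?scale_regE ?mulr0.
Qed.

Lemma pu_neq_pw i j : pu i != pw j.
Proof. by apply: contraNneq (pw_notin j) => <-. Qed.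

Lemma pivot_indep (a : 'I_n -> k) (b : 'I_m -> k) :
  \sum_i a i *: u i + \sum_j b j *: w j = 0 -> (forall i, a i = 0) /\ (forall j, b j = 0).
Proof.
move=> sum0.
have b0 j : b j = 0.
  have /eqP := congr1 (fun v : {ffun X -> k^o} => v (pw j)) sum0.
  rewrite /= !ffunE sum_indicator_out => [|i]; last exact: pu_neq_pw.
  by rewrite add0r sum_pivot_at mulf_eq0 (negbTE (w_pivot j)) orbF => /eqP.
split=> //; apply: indicator_indep.
by move: sum0; under [X in _ + X]eq_bigr do rewrite b0 scale0r; rewrite big1_eq addr0.
Qed.

Hypothesis pu_onto : forall x, G x -> exists i, pu i = x.
Hypothesis pw_onto : forall x, ~~ G x -> exists j, pw j = x.

Lemma pivot_span (x : {ffun X -> k^o}) : exists a b : nat -> k,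
  x = \sum_(i < n) a i *: u i + \sum_(j < m) b j *: w j.
Proof.
pose b' j := x (pw j) / w j (pw j).
pose y := x - \sum_j b' j *: w j.
exists (fun i => oapp (fun i => y (pu i)) 0 (insub i)), (fun j => oapp b' 0 (insub j)).
apply/ffunP => z; rewrite ffunE [in X in _ + X](eq_bigr (fun j => b' j *: w j)); last first.
  by move=> j _; rewrite valK.
case: (boolP (G z)) => [/pu_onto[i <-] | /pw_onto[j <-]].
  by rewrite sum_indicator_at valK /= /y !ffunE subrK.
by rewrite sum_indicator_out ?add0r ?sum_pivot_at ?divfK // => i; apply: pu_neq_pw.
Qed.

End Pivots.

Section FreeOver.
Local Unset Implicit Arguments.
Variables (k : fieldType) (X : finType) (N : nat) (s : 'I_N -> nat) (W : 'I_N -> finType).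
Variable P : forall z, {ffun W z -> k^o}.
Variable act : forall z, 'I_(s z) -> {ffun W z -> k^o} -> {ffun X -> k^o}.
Hypothesis actZ : forall z j c b, act z j (c *: b) = c *: act z j b.

(* The common shape of [left_free_at] and [right_free_at]: [P z] spans the image of
   [u_a] at the object [z], and [act z j] composes with the [j]-th generator at [z]. *)
Definition free_over : Prop :=
  (forall x, exists beta : forall z, 'I_(s z) -> {ffun W z -> k^o},
     (forall z j, exists c : k, beta z j = c *: P z) /\
     x = \sum_z \sum_j act z j (beta z j)) /\
  (forall beta : forall z, 'I_(s z) -> {ffun W z -> k^o},
     (forall z j, exists c : k, beta z j = c *: P z) ->
     \sum_z \sum_j act z j (beta z j) = 0 -> forall z j, beta z j = 0).

Lemma free_over_coords :
  (forall x, exists c : nat -> nat -> k, x = \sum_z \sum_j act z j (c z j *: P z)) ->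
  (forall c : forall z, 'I_(s z) -> k,
     \sum_z \sum_j act z j (c z j *: P z) = 0 -> forall z j, c z j *: P z = 0) ->
  free_over.
Proof.
move=> span indep; split=> [x | beta beta_im sum0 z j].
  have [c ->] := span x; exists (fun z (j : 'I_(s z)) => c z j *: P z).
  by split=> // z j; exists (c z j).
have [c betaE] := fin_all_exists (fun z => fin_all_exists (beta_im z)).
rewrite betaE; apply: indep; rewrite -[RHS]sum0.
by apply: eq_bigr => z' _; apply: eq_bigr => j' _; rewrite betaE.
Qed.

Lemma sum_act_one z0 (c : forall z, 'I_(s z) -> k) :
  (forall z, z != z0 -> P z = 0) ->
  \sum_z \sum_j act z j (c z j *: P z) = \sum_j c z0 j *: act z0 j (P z0).
Proof.
move=> P0; rewrite (bigD1 z0) //= [X in _ + X]big1 ?addr0 => [|z ne_z]; last first.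
  by apply: big1 => j _; rewrite P0 // scaler0 -(scale0r 0) actZ scale0r.
by apply: eq_bigr => j _; rewrite actZ.
Qed.

Lemma sum_act_two z0 z1 (c : forall z, 'I_(s z) -> k) : z0 != z1 ->
  (forall z, z != z0 -> z != z1 -> P z = 0) ->
  \sum_z \sum_j act z j (c z j *: P z) =
  \sum_j c z0 j *: act z0 j (P z0) + \sum_j c z1 j *: act z1 j (P z1).
Proof.
move=> ne_z01 P0; rewrite (bigD1 z0) //= (bigD1 z1) 1?eq_sym //=.
rewrite [X in _ + (_ + X)]big1 ?addr0 => [|z /andP[ne_z0 ne_z1]].
  by congr (_ + _); apply: eq_bigr => j _; rewrite actZ.
by apply: big1 => j _; rewrite P0 // scaler0 -(scale0r 0) actZ scale0r.
Qed.

Lemma free_over_indicators z0 (pu : 'I_(s z0) -> X) :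
  (forall z, z != z0 -> P z = 0) ->
  (forall j, act z0 j (P z0) = [ffun x => (x == pu j)%:R]) ->
  injective pu -> (forall x, exists j, pu j = x) -> free_over.
Proof.
move=> P0 u_ind pu_inj pu_onto; apply: free_over_coords => [x | c].
  have [a ->] := indicator_span u_ind pu_inj pu_onto x.
  by exists (fun _ j => a j); rewrite (sum_act_one z0).
rewrite (sum_act_one z0) // => /(indicator_indep u_ind pu_inj) c0 z j.
by case: (eqVneq z z0) j => [-> j | /P0 -> j]; rewrite ?c0 ?scale0r ?scaler0.
Qed.

Lemma free_over_pivots z0 z1 (G : pred X) (pu : 'I_(s z0) -> X) (pw : 'I_(s z1) -> X) :
  z0 != z1 -> (forall z, z != z0 -> z != z1 -> P z = 0) ->
  (forall j, act z0 j (P z0) = [ffun x => (x == pu j)%:R]) ->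
  injective pu -> (forall j, G (pu j)) -> (forall x, G x -> exists j, pu j = x) ->
  (forall j, ~~ G (pw j)) -> (forall x, ~~ G x -> exists j, pw j = x) ->
  (forall j, act z1 j (P z1) (pw j) != 0) ->
  (forall j j', j != j' -> act z1 j (P z1) (pw j') = 0) ->
  free_over.
Proof.
move=> ne_z01 P0 u_ind pu_inj pu_in pu_onto pw_notin pw_onto w_piv w_off.
apply: free_over_coords => [x | c].
  have [a [b ->]] := pivot_span u_ind pu_inj pu_in pw_notin w_piv w_off pu_onto pw_onto x.
  exists (fun z j => if z == val z0 then a j else if z == val z1 then b j else 0).
  by rewrite (sum_act_two _ _ _ ne_z01 P0) /= eqxx val_eqE eq_sym (negbTE ne_z01) eqxx.
rewrite (sum_act_two _ _ _ ne_z01 P0).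
move=> /(pivot_indep u_ind pu_inj pu_in pw_notin w_piv w_off)[c0 c1] z j.
case: (eqVneq z z0) j => [-> j | ne_z0 j]; first by rewrite c0 scale0r.
case: (eqVneq z z1) j => [-> j | ne_z1 j]; first by rewrite c1 scale0r.
by rewrite P0 ?scaler0.
Qed.

Lemma free_over_trivial :
  (forall z, P z = 0) -> (forall x : {ffun X -> k^o}, x = 0) -> free_over.
Proof.
move=> P0 X0; apply: free_over_coords => [x | c _ z j]; last by rewrite P0 scaler0.
by exists (fun _ _ => 0); rewrite [LHS]X0 [RHS]X0.
Qed.

End FreeOver.

Arguments free_over {k X N s W} P act.
Arguments free_over_indicators {k X N s W P act} actZ z0 pu.
Arguments free_over_pivots {k X N s W P act} actZ z0 z1 G pu pw.
Arguments free_over_trivial {k X N s W P act}.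

Section Generators.
Variable k : fieldType.

Definition gens a b (P : pred (dhom a b)) : seq (kD k a b) := map (@bvec k a b) (enum P).

Lemma gens_enum a b (P : pred (dhom a b)) :
  exists pu : 'I_(size (gens P)) -> dhom a b,
    [/\ forall j : 'I_(size (gens P)), nth 0 (gens P) j = bvec k (pu j), injective pu,
        forall j, P (pu j) & forall f, P f -> exists j, pu j = f].
Proof.
have size_gens : size (gens P) = #|P| by rewrite size_map -cardE.
exists (fun j => enum_val (cast_ord size_gens j)); split.
- move=> j; rewrite (nth_map (enum_val (cast_ord size_gens j))); last by rewrite -cardE -size_gens.
  by congr (bvec k _); apply/esym/enum_val_nth.
- by move=> j j' /enum_val_inj/cast_ord_inj.
- by move=> j; apply: enum_valP.
- move=> f Pf; exists (cast_ord (esym size_gens) (enum_rank_in Pf f)).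
  by rewrite cast_ordKV enum_rankK_in.
Qed.

Definition left_gens p z := gens (fun f : dhom p z => ~~ odd (dmin f)).

Definition right_gens q (z : 'I_q.+1) := gens (fun e : dhom z q => dmin e == 0%N).

End Generators.

Section Freeness.
Variable k : fieldType.

Lemma left_free_atP p (E : forall z, seq (kD k p z)) :
  (forall q, free_over (s := fun z : 'I_q.+1 => size (E z)) (W := fun z => dhom z q)
                       (fun z => ua_path k z q) (fun z j b => kcomp b (nth 0 (E z) j))) ->
  left_free_at k p.
Proof. by exists E. Qed.

Lemma right_free_atP q (E : forall z : 'I_q.+1, seq (kD k z q)) :
  (forall p, free_over (s := fun z => size (E z)) (W := fun z : 'I_q.+1 => dhom p z)
                       (fun z => ua_path k p z) (fun z j b => kcomp (nth 0 (E z) j) b)) ->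
  right_free_at k q.
Proof. by exists E. Qed.

Lemma left_free p : left_free_at k p.
Proof.
apply: (left_free_atP (E := left_gens k p)) => -[|n].
  have [pu [nth_pu pu_inj _ pu_onto]] := gens_enum k (fun f : dhom p 0 => ~~ odd (dmin f)).
  apply: (free_over_indicators _ ord0 pu) => // [z j c b | z | j | f].
  - exact: kcompZl.
  - by rewrite ord1 eqxx.
  - by rewrite ua_path_id kcomp_idl nth_pu.
  - by apply: pu_onto; have := dmin_le_id f; rewrite leqn0 => /eqP ->.
have [pu [nth_pu pu_inj pu_even pu_onto]] := gens_enum k (fun f : dhom p n.+1 => ~~ odd (dmin f)).
have [rho [nth_rho rho_inj rho_even rho_onto]] := gens_enum k (fun f : dhom p n => ~~ odd (dmin f)).
pose pw j := dcomp (delta ord0) (rho j).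
apply: (free_over_pivots _ ord_max (Ordinal (leqnSn n.+1)) (fun f => ~~ odd (dmin f)) pu pw) => //.
- by move=> z j c b; apply: kcompZl.
- by rewrite -val_eqE /= gtn_eqF.
- move=> z; rewrite -!val_eqE /= => ne_z0 ne_z1; apply: ua_path_other; lia.
- by move=> j; rewrite ua_path_id kcomp_idl nth_pu.
- by move=> j; rewrite negbK /pw dmin_delta0 /= rho_even.
- move=> x; rewrite negbK => odd_x.
  have [f def_x] : exists f, dcomp (delta ord0) f = x.
    by apply: dmin_gt0_factor; case: (dmin x) odd_x.
  have [j def_f] : exists j, rho j = f by apply: rho_onto; move: odd_x; rewrite -def_x dmin_delta0.
  by exists j; rewrite /pw def_f.
- move=> j; rewrite ua_path_d nth_rho kcomp_ua_d_bvecE.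
  under eq_bigr do rewrite eq_sym eq_delta_dcomp0.
  by rewrite sum_sign_leq ?oner_eq0 ?rho_even // ltnS dmin_le_id.
move=> j j' ne_jj'; rewrite ua_path_d nth_rho kcomp_ua_d_bvecE big1 // => i _.
case: eqP => [eq_pw | _]; last by rewrite mulr0.
case: (leqP i (dmin (rho j))) => [le_i | lt_i].
  have /eqP eq_i : dcomp (delta i) (rho j) == dcomp (delta ord0) (rho j) by rewrite eq_delta_dcomp0.
  by move: eq_pw; rewrite eq_i => /dcomp_delta_inj/rho_inj eq_j; rewrite eq_j eqxx in ne_jj'.
have := congr1 (fun f => odd (dmin f)) eq_pw; rewrite /= dmin_delta0 dmin_dcomp_delta //=.
by rewrite (negbTE (rho_even j)) (negbTE (rho_even j')).
Qed.

Lemma right_free q : right_free_at k q.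
Proof.
apply: (right_free_atP (E := @right_gens k q)) => p.
case: (ltngtP p q) => [lt_pq | lt_qp | eq_pq].
- have [pu [nth_pu pu_inj pu_in pu_onto]] := gens_enum k (fun f : dhom p q => dmin f == 0%N).
  have [rho [nth_rho rho_inj rho_in rho_onto]] :=
    gens_enum k (fun e : dhom p.+1 q => dmin e == 0%N).
  have rho0 j : val (rho j ord0) = 0%N by have /eqP := rho_in j; rewrite dminS.
  pose pw j := dcomp (rho j) (delta ord0).
  have lt_pSq : (p < q.+1)%N by apply: ltnW.
  pose z0 := @Ordinal q.+1 p lt_pSq; pose z1 := @Ordinal q.+1 p.+1 lt_pq.
  apply: (free_over_pivots _ z0 z1 (fun f => dmin f == 0%N) pu pw) => //.
  + by move=> z j c b; apply: kcompZr.
  + by rewrite -val_eqE /= ltn_eqF.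
  + move=> z; rewrite -!val_eqE /= => ne_z0 ne_z1; apply: ua_path_other; lia.
  + by move=> j; rewrite ua_path_id kcomp_idr nth_pu.
  + by move=> j; rewrite -lt0n (leq_ltn_trans _ (dmin_dcomp_delta0 (rho j))).
  + move=> x; rewrite -lt0n => /dmin_gt0_extend[e [e0 def_x]].
    have [j def_e] : exists j, rho j = e by apply: rho_onto; rewrite dminS e0.
    by exists j; rewrite /pw def_e.
  + move=> j; rewrite ua_path_d nth_rho kcomp_bvec_ua_dE (bigD1 ord0) //= eqxx big1 => [|i ne_i0].
      by rewrite addr0 mulr1 oner_eq0.
    case: eqP => [/esym/eq_dcomp_delta0 [] // i0 _ | _]; last by rewrite mulr0.
    by rewrite i0 eqxx in ne_i0.
  + move=> j j' ne_jj'; rewrite ua_path_d nth_rho kcomp_bvec_ua_dE big1 // => i _.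
    case: eqP => [/esym/eq_dcomp_delta0 [|_ /rho_inj eq_j]| _]; last by rewrite mulr0.
      by rewrite !rho0.
    by rewrite eq_j eqxx in ne_jj'.
- apply: free_over_trivial => [z | x]; apply: kD_trivial => //.
  exact: leq_trans (ltn_ord z) lt_qp.
- subst q; have [pu [nth_pu pu_inj _ pu_onto]] := gens_enum k (fun f : dhom p p => dmin f == 0%N).
  apply: (free_over_indicators _ ord_max pu) => // [z j c b | z | j | f].
  + exact: kcompZr.
  + rewrite -val_eqE /= => ne_zp; have lt_zSp := ltn_ord z.
    by apply: ua_path_other; lia.
  + by rewrite ua_path_id kcomp_idr nth_pu.
  + by apply: pu_onto; rewrite dmin_id.
Qed.

End Freeness.

Theorem lemma2p2 (k : fieldType) :
  (forall p : nat, left_free_at k p) /\ (forall q : nat, right_free_at k q).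
Proof. by split=> [p | q]; [apply: left_free | apply: right_free]. Qed.
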